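(* Let $p\ge5$, let $\lambda$ be the leftmost assignment and $\alpha$ an assignment on the white metallic tree; let $\lambda_\ell(\nu)$, $\alpha_\ell(\nu)$ be the leftmost son of $\nu$ in $\mathcal W_\lambda$, $\mathcal W_\alpha$ respectively, $\delta_{\lambda\alpha}(\nu)=\alpha_\ell(\nu)-\lambda_\ell(\nu)$, and let $st_\lambda(\nu)$, $st_\alpha(\nu)$ be the colour (black or white) of $\nu$ in $\mathcal W_\lambda$, $\mathcal W_\alpha$. Then for every positive integer $\nu$: if $st_\lambda(\nu)=st_\alpha(\nu)$ then $\delta_{\lambda\alpha}(\nu+1)=\delta_{\lambda\alpha}(\nu)$; if $st_\lambda(\nu)$ is white and $st_\alpha(\nu)$ is black then $\delta_{\lambda\alpha}(\nu+1)=\delta_{\lambda\alpha}(\nu)-1$; if $st_\lambda(\nu)$ is black and $st_\alpha(\nu)$ is white then $\delta_{\lambda\alpha}(\nu+1)=\delta_{\lambda\alpha}(\nu)+1$.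
   Context: Fix $p\ge5$. White metallic tree under an assignment $\alpha$, $\mathcal W_\alpha$: nodes are the positive integers, each black or white; root $1$ is white; nodes are processed in increasing order and node $\nu$ receives $p-2$ sons if white and $p-3$ sons if black, namely the smallest integers not yet used, in increasing order; an assignment specifies for each node the position (leftmost = $1$) of its unique black son among its sons, other sons being white. The leftmost assignment $\lambda$ always puts the black son at position $1$. *)

From mathcomp Require Import all_boot.
From mathcomp Require Import all_order all_algebra.
Set Implicit Arguments. Unset Strict Implicit. Unset Printing Implicit Defensive.

(* White metallic tree W_alpha, parameter p.
   Colours: [true] = black, [false] = white.
   Nodes are positive integers; node nu is stored at list position nu-1.
   An assignment alpha : nat -> nat gives, for each node nu, the position
   (leftmost = 1) of its unique black son. *)

Definition nsons (p : nat) (b : bool) : nat := if b then p - 3 else p - 2.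

Definition sons_colours (p : nat) (alpha : nat -> nat) (b : bool) (nu : nat)
  : seq bool := mkseq (fun i => i.+1 == alpha nu) (nsons p b).

(* [build p alpha n] = colours of all nodes created after processing
   nodes 1, ..., n in increasing order (the root 1 is white). *)
Fixpoint build (p : nat) (alpha : nat -> nat) (n : nat) : seq bool :=
  match n with
  | 0 => [:: false]
  | k.+1 => let s := build p alpha k in
            s ++ sons_colours p alpha (nth false s k) k.+1
  end.

Definition colour (p : nat) (alpha : nat -> nat) (nu : nat) : bool :=
  nth false (build p alpha nu) nu.-1.

(* alpha_l(nu): leftmost son of nu in W_alpha: the smallest integer not used
   after processing nodes 1, ..., nu-1 *)
Definition leftmost_son (p : nat) (alpha : nat -> nat) (nu : nat) : nat :=
  (size (build p alpha nu.-1)).+1.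

Definition is_assignment (p : nat) (alpha : nat -> nat) : Prop :=
  forall nu, 0 < nu -> 1 <= alpha nu <= nsons p (colour p alpha nu).

Definition leftmost_assignment : nat -> nat := fun _ => 1.

Definition delta (p : nat) (alpha : nat -> nat) (nu : nat) : int :=
  (leftmost_son p alpha nu)%:Z - (leftmost_son p leftmost_assignment nu)%:Z.

(* Processing node nu consumes exactly as many fresh integers as nu has sons,
   so the leftmost son of nu+1 is that of nu shifted by the number of sons of
   nu.  Hence delta changes by the difference of the numbers of sons of nu in
   the two trees, and a white node has exactly one son more than a black one. *)

From mathcomp Require Import all_boot all_order all_algebra.
From mathcomp Require Import zify.
Import GRing.Theory.
Local Open Scope ring_scope.

Section Growth.

Variables (p : nat) (alpha : nat -> nat).
(* Every node then has a son, so node k+1 already exists once k nodes are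
   processed and [colour] never reads the default of [nth]. *)
Hypothesis p_gt3 : (3 < p)%N.

Lemma ltn_size_build (k : nat) : (k < size (build p alpha k))%N.
Proof.
elim: k => [//|k IHk] /=.
by rewrite size_cat size_mkseq /nsons; case: nth; lia.
Qed.

Lemma colourS (k : nat) : colour p alpha k.+1 = nth false (build p alpha k) k.
Proof. by rewrite /colour /= nth_cat ltn_size_build. Qed.

Lemma leftmost_sonS (nu : nat) : (0 < nu)%N ->
  leftmost_son p alpha nu.+1 =
    (leftmost_son p alpha nu + nsons p (colour p alpha nu))%N.
Proof.
case: nu => [//|k] _.
by rewrite /leftmost_son /= size_cat size_mkseq colourS addSn.
Qed.

End Growth.

Lemma nsons_white (p : nat) : (2 < p)%N -> nsons p false = (nsons p true + 1)%N.
Proof. by rewrite /nsons; lia. Qed.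

Lemma deltaS (p : nat) (alpha : nat -> nat) (nu : nat) :
  (3 < p)%N -> (0 < nu)%N ->
  delta p alpha nu.+1 = delta p alpha nu
    + (nsons p (colour p alpha nu))%:Z
    - (nsons p (colour p leftmost_assignment nu))%:Z.
Proof.
move=> p_gt3 nu_gt0; rewrite /delta !leftmost_sonS // !PoszD.
by rewrite opprD addrACA addrA.
Qed.

Theorem lemma7 (p : nat) (alpha : nat -> nat) :
  (5 <= p)%N -> is_assignment p alpha ->
  forall nu : nat, (0 < nu)%N ->
  [/\ (colour p leftmost_assignment nu = colour p alpha nu ->
         delta p alpha nu.+1 = delta p alpha nu),
      (colour p leftmost_assignment nu = false -> colour p alpha nu = true ->
         delta p alpha nu.+1 = delta p alpha nu - 1)
    & (colour p leftmost_assignment nu = true -> colour p alpha nu = false ->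
         delta p alpha nu.+1 = delta p alpha nu + 1)].
Proof.
move=> p_ge5 _ nu nu_gt0.
have p_gt3 : (3 < p)%N by lia.
rewrite deltaS //; split=> [-> | -> -> | -> ->]; first by rewrite addrK.
- by rewrite nsons_white ?(ltnW p_gt3) // PoszD opprD addrA addrK.
- by rewrite nsons_white ?(ltnW p_gt3) // PoszD addrA addrAC addrK.
Qed.
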